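(* Let $\rho\in(0,1)$ and let $S\in\mathbb{R}^{m\times n}$ be such that the event $\mathcal{E}^m_\rho$ holds, i.e. $\|C_S-I_d\|_2\leqslant\sqrt{\rho}$. Then for every $x\in\mathbb{R}^d$, $|\delta_x-\widetilde\delta_x|\leqslant\sqrt{\rho}\,\widetilde\delta_x$. Consequently, if $S$ is drawn from a random embedding with critical sketch size $m_\delta$ (for a given $\delta\in(0,1)$) and $m>m_\delta$, then with probability at least $1-\delta$ we have $|\delta_x-\widetilde\delta_x|\leqslant\sqrt{m_\delta/m}\,\widetilde\delta_x$ for all $x\in\mathbb{R}^d$.
   Context: Let $A\in\mathbb{R}^{n\times d}$ with $n\geqslant d$, $b\in\mathbb{R}^d$, $\Lambda\in\mathbb{R}^{d\times d}$ diagonal with $\Lambda\succeq I_d$, and $\nu>0$. Set $H=A^\top A+\nu^2\Lambda$, $f(x)=\frac12 x^\top Hx-b^\top x$ and $x^*=H^{-1}b$. For $S\in\mathbb{R}^{m\times n}$ set $H_S=A^\top S^\top SA+\nu^2\Lambda$ and $C_S=H^{-1/2}H_SH^{-1/2}$. For $x\in\mathbb{R}^d$ let $\delta_x=\frac12\|x-x^*\|_H^2$ (with $\|z\|_H^2=z^\top Hz$) and $\widetilde\delta_x=\frac12\nabla f(x)^\top H_S^{-1}\nabla f(x)$. For $\rho>0$, $\mathcal{E}^m_\rho$ denotes the event $\|C_S-I_d\|_2\leqslant\max\{\sqrt\rho,\rho\}$. A random embedding is a family of distributions of random matrices $S\in\mathbb{R}^{m\times n}$, one for each $m\geqslant1$;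 given $\delta\in(0,1)$ its critical sketch size is $m_\delta=\inf\{k\geqslant1:\ \mathbb{P}(\mathcal{E}^m_\rho)\geqslant1-\delta \text{ for all } \rho>0 \text{ and all } m\geqslant k/\rho\}$. *)

From HB Require Import structures.
From mathcomp Require Import all_boot all_order all_algebra.
From mathcomp Require Import all_classical all_reals all_analysis.
From Stdlib Require Import ClassicalEpsilon.

Set Implicit Arguments.
Unset Strict Implicit.
Unset Printing Implicit Defensive.

Import Order.TTheory GRing.Theory Num.Theory.
Local Open Scope classical_set_scope.
Local Open Scope ring_scope.

Definition quadf (R : realType) (d : nat) (M : 'M[R]_d) (v : 'cV[R]_d) : R :=
  (v^T *m M *m v) 0 0.

Definition enorm (R : realType) (k : nat) (v : 'cV[R]_k) : R :=
  Num.sqrt (\sum_(i < k) v i 0 ^+ 2).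

Definition specnorm (R : realType) (p q : nat) (M : 'M[R]_(p, q)) : R :=
  sup [set enorm (M *m v) | v in [set v : 'cV[R]_q | enorm v = 1]].

Definition posdefmx (R : realType) (d : nat) (M : 'M[R]_d) : Prop :=
  forall v : 'cV[R]_d, v != 0 -> 0 < quadf M v.

Definition invsqrtmx (R : realType) (d : nat) (H : 'M[R]_d) : 'M[R]_d :=
  epsilon (inhabits 0)
    (fun P : 'M[R]_d => P^T = P /\ posdefmx P /\ P *m P = invmx H).

Definition Hmat (R : realType) (n d : nat) (A : 'M[R]_(n, d))
  (Lam : 'M[R]_d) (nu : R) : 'M[R]_d :=
  A^T *m A + (nu ^+ 2) *: Lam.

Definition HSmat (R : realType) (m n d : nat) (S : 'M[R]_(m, n))
  (A : 'M[R]_(n, d)) (Lam : 'M[R]_d) (nu : R) : 'M[R]_d :=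
  A^T *m S^T *m S *m A + (nu ^+ 2) *: Lam.

Definition CSmat (R : realType) (m n d : nat) (S : 'M[R]_(m, n))
  (A : 'M[R]_(n, d)) (Lam : 'M[R]_d) (nu : R) : 'M[R]_d :=
  let Hm := invsqrtmx (Hmat A Lam nu) in Hm *m HSmat S A Lam nu *m Hm.

Definition fobj (R : realType) (n d : nat) (A : 'M[R]_(n, d)) (b : 'cV[R]_d)
  (Lam : 'M[R]_d) (nu : R) (x : 'cV[R]_d) : R :=
  2^-1 * quadf (Hmat A Lam nu) x - (b^T *m x) 0 0.

(* gradient of f (H is symmetric): H x - b *)
Definition gradf (R : realType) (n d : nat) (A : 'M[R]_(n, d)) (b : 'cV[R]_d)
  (Lam : 'M[R]_d) (nu : R) (x : 'cV[R]_d) : 'cV[R]_d :=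
  Hmat A Lam nu *m x - b.

Definition xstar (R : realType) (n d : nat) (A : 'M[R]_(n, d)) (b : 'cV[R]_d)
  (Lam : 'M[R]_d) (nu : R) : 'cV[R]_d :=
  invmx (Hmat A Lam nu) *m b.

Definition delta_x (R : realType) (n d : nat) (A : 'M[R]_(n, d)) (b : 'cV[R]_d)
  (Lam : 'M[R]_d) (nu : R) (x : 'cV[R]_d) : R :=
  2^-1 * quadf (Hmat A Lam nu) (x - xstar A b Lam nu).

Definition delta_t (R : realType) (m n d : nat) (S : 'M[R]_(m, n))
  (A : 'M[R]_(n, d)) (b : 'cV[R]_d) (Lam : 'M[R]_d) (nu : R)
  (x : 'cV[R]_d) : R :=
  2^-1 * quadf (invmx (HSmat S A Lam nu)) (gradf A b Lam nu x).

Definition eventE (R : realType) (m n d : nat) (S : 'M[R]_(m, n))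
  (A : 'M[R]_(n, d)) (Lam : 'M[R]_d) (nu : R) (rho : R) : Prop :=
  specnorm (CSmat S A Lam nu - 1%:M) <= Num.max (Num.sqrt rho) rho.

(* critical sketch size of a random embedding (S m : Omega -> 'M_(m,n))_m
   on the probability space (Omega, P); value in the extended reals
   (+oo if the defining set is empty). *)
Definition crit_size (R : realType) (n d : nat) (A : 'M[R]_(n, d))
  (Lam : 'M[R]_d) (nu : R) (d0 : measure_display) (Omega : measurableType d0)
  (P : probability Omega R) (S : forall m : nat, Omega -> 'M[R]_(m, n))
  (delta : R) : \bar R :=
  ereal_inf [set k%:E | k in [set k : R | 1 <= k /\
     forall rho : R, 0 < rho -> forall m : nat, (0 < m)%N -> k / rho <= m%:R ->
       ((1 - delta)%:E <= P [set w | eventE (S m w) A Lam nu rho])%E]].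

(* Write P = H^(-1/2), C = C_S = P H_S P, Q = C^(1/2), g = grad f(x) and
   y = Q^(-1) P g.  Since x - x* = H^(-1) g, we get delta_x = g^T H^(-1) g / 2
   = y^T C y / 2 and tilde delta_x = g^T H_S^(-1) g / 2 = y^T y / 2, hence
   |delta_x - tilde delta_x| = |y^T (C - I) y| / 2 <= ||C - I|| tilde delta_x,
   and on E_rho with rho < 1 we have ||C - I|| <= sqrt rho.  The symmetric
   square roots come from the spectral theorem over R[i]: the square root is
   the real polynomial in the matrix that interpolates sqrt at its eigenvalues.
   For a random embedding and rho > m_delta/m, some admissible k satisfies
   k < rho m, i.e. m >= k/rho, so P(E_rho) >= 1 - delta.  Since
   rho |-> max(sqrt rho, rho) is continuous, the events E_rho decrease to
   E_(m_delta/m) as rho decreases to m_delta/m, and continuity of P from above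
   gives the same bound there. *)

From HB Require Import structures.
From mathcomp Require Import all_boot all_order all_algebra.
From mathcomp Require Import all_classical all_reals all_analysis.
From mathcomp Require Import complex.
From mathcomp Require Import ring lra.
From Stdlib Require Import ClassicalEpsilon.

Set Implicit Arguments.
Unset Strict Implicit.
Unset Printing Implicit Defensive.

Import Order.TTheory GRing.Theory Num.Theory numFieldNormedType.Exports.
Local Open Scope classical_set_scope.
Local Open Scope ring_scope.

Lemma poly_interpolation (F : fieldType) (s : seq F) (f : F -> F) :
  exists p : {poly F}, {in s, forall y, p.[y] = f y}.
Proof.
elim: s => [|y s [p Hp]]; first by exists 0.
have [ys|yns] := boolP (y \in s).
  by exists p => z; rewrite inE => /orP[/eqP->|]; apply: Hp.
pose q := \prod_(z <- s) ('X - z%:P).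
have qy : q.[y] != 0 by rewrite -/(root q y) root_prod_XsubC.
exists (p + ((f y - p.[y]) / q.[y]) *: q) => z.
rewrite inE hornerD hornerZ => /orP[/eqP->|zs].
  by rewrite divfK // addrC subrK.
have /rootP -> : root q z by rewrite root_prod_XsubC.
by rewrite mulr0 addr0 Hp.
Qed.

Lemma trmx_horner_mx (R : comNzRingType) n (M : 'M[R]_n.+1) p :
  M^T = M -> (horner_mx M p)^T = horner_mx M p.
Proof.
move=> MT; elim/poly_ind: p => [|p c IH]; first by rewrite rmorph0 trmx0.
rewrite !(rmorphD, rmorphM) /= horner_mx_X horner_mx_C linearD /= tr_scalar_mx.
congr (_ + _); rewrite -[_ * _]/(_ *m _) trmx_mul IH MT.
by have := comm_mx_horner p (erefl (M *m M)).
Qed.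

Section Dot.
Variable R : realDomainType.

Definition dot n (u v : 'cV[R]_n) : R := (u^T *m v) 0 0.

Lemma dotE n (u v : 'cV[R]_n) : dot u v = \sum_i u i 0 * v i 0.
Proof. by rewrite /dot mxE; apply: eq_bigr => i _; rewrite mxE. Qed.

Lemma dot0r n (u : 'cV[R]_n) : dot u 0 = 0.
Proof. by rewrite /dot mulmx0 mxE. Qed.

Lemma dotZZ n (a : R) (u : 'cV[R]_n) : dot (a *: u) (a *: u) = a ^+ 2 * dot u u.
Proof. by rewrite !dotE mulr_sumr; apply: eq_bigr => i _; rewrite mxE; ring. Qed.

Lemma dot_ge0 n (u : 'cV[R]_n) : 0 <= dot u u.
Proof. by rewrite dotE; apply: sumr_ge0 => i _; rewrite -expr2 sqr_ge0. Qed.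

Lemma dot_gt0 n (u : 'cV[R]_n) : u != 0 -> 0 < dot u u.
Proof.
move=> u0; rewrite lt_def dot_ge0 andbT; apply: contra u0.
have sq_ge0 i : 0 <= u i 0 * u i 0 by rewrite -expr2 sqr_ge0.
rewrite dotE => /eqP/psumr_eq0P u2_eq0; apply/eqP/matrixP => i j.
have /eqP := u2_eq0 (fun i _ => sq_ge0 i) i isT.
by rewrite mulf_eq0 orbb ord1 mxE => /eqP.
Qed.

Lemma dot_CauchySchwarz n (u v : 'cV[R]_n) : dot u v ^+ 2 <= dot u u * dot v v.
Proof.
have [->|v0] := eqVneq v 0; first by rewrite !dot0r expr0n mulr0.
have gram (a c : R) : dot (a *: u - c *: v) (a *: u - c *: v) =
    a ^+ 2 * dot u u - 2 * a * c * dot u v + c ^+ 2 * dot v v.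
  rewrite !dotE !mulr_sumr -sumrB -big_split /=.
  by apply: eq_bigr => i _; rewrite !mxE; ring.
have := dot_ge0 (dot v v *: u - dot u v *: v).
have -> : dot (dot v v *: u - dot u v *: v) (dot v v *: u - dot u v *: v) =
    dot v v * (dot v v * dot u u - dot u v ^+ 2) by rewrite gram; ring.
by rewrite pmulr_rge0 ?dot_gt0 // subr_ge0 mulrC.
Qed.

End Dot.

Section QuadraticForm.
Variable R : realType.

Lemma quadf_dot n (M : 'M[R]_n) v : quadf M v = dot v (M *m v).
Proof. by rewrite /quadf /dot mulmxA. Qed.

Lemma quadf1 n (v : 'cV[R]_n) : quadf 1%:M v = dot v v.
Proof. by rewrite /quadf mulmx1. Qed.

Lemma quadfD n (M N : 'M[R]_n) v : quadf (M + N) v = quadf M v + quadf N v.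
Proof. by rewrite /quadf mulmxDr mulmxDl !mxE. Qed.

Lemma quadfB n (M N : 'M[R]_n) v : quadf (M - N) v = quadf M v - quadf N v.
Proof. by rewrite /quadf mulmxBr mulmxBl !mxE. Qed.

Lemma quadfZ n c (M : 'M[R]_n) v : quadf (c *: M) v = c * quadf M v.
Proof. by rewrite /quadf -scalemxAr -scalemxAl !mxE. Qed.

Lemma quadf_conj n k (M : 'M[R]_n) (P : 'M[R]_(n, k)) v :
  quadf (P^T *m M *m P) v = quadf M (P *m v).
Proof. by rewrite /quadf trmx_mul !mulmxA. Qed.

Lemma quadf_gram p n (X : 'M[R]_(p, n)) v :
  quadf (X^T *m X) v = dot (X *m v) (X *m v).
Proof. by rewrite /quadf /dot trmx_mul !mulmxA. Qed.

Lemma enormE n (u : 'cV[R]_n) : enorm u = Num.sqrt (dot u u).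
Proof. by rewrite dotE; congr Num.sqrt; apply: eq_bigr => i _; rewrite expr2. Qed.

Lemma enorm_ge0 n (u : 'cV[R]_n) : 0 <= enorm u.
Proof. exact: sqrtr_ge0. Qed.

Lemma enorm_sqr n (u : 'cV[R]_n) : enorm u ^+ 2 = dot u u.
Proof. by rewrite enormE sqr_sqrtr // dot_ge0. Qed.

Lemma enormZ n (a : R) (u : 'cV[R]_n) : enorm (a *: u) = `|a| * enorm u.
Proof. by rewrite !enormE dotZZ sqrtrM ?sqr_ge0 // sqrtr_sqr. Qed.

Lemma enorm_gt0 n (u : 'cV[R]_n) : u != 0 -> 0 < enorm u.
Proof. by move=> u0; rewrite enormE sqrtr_gt0 dot_gt0. Qed.

Lemma dot_le_enorm n (u v : 'cV[R]_n) : `|dot u v| <= enorm u * enorm v.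
Proof.
rewrite !enormE -sqrtrM ?dot_ge0 // -sqrtr_sqr.
by apply: ler_wsqrtr; exact: dot_CauchySchwarz.
Qed.

Lemma specnorm_has_ubound p q (E : 'M[R]_(p, q)) :
  has_ubound [set enorm (E *m v) | v in [set v : 'cV[R]_q | enorm v = 1]].
Proof.
(* The Frobenius norm of E is an upper bound. *)
exists (Num.sqrt (\sum_i dot (row i E)^T (row i E)^T)) => _ [u /= u1 <-].
rewrite enormE; apply: ler_wsqrtr; rewrite dotE.
apply: ler_sum => i _; rewrite -expr2.
have -> : (E *m u) i 0 = dot (row i E)^T u.
  by rewrite /dot trmxK -row_mul [RHS]mxE.
rewrite (le_trans (dot_CauchySchwarz _ _)) //.
by rewrite -(enorm_sqr u) u1 expr1n mulr1.
Qed.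

Lemma enorm_mul_le p q (E : 'M[R]_(p, q)) v :
  enorm (E *m v) <= specnorm E * enorm v.
Proof.
have enorm0 k : enorm (0 : 'cV[R]_k) = 0 by rewrite enormE dot0r sqrtr0.
have [->|v0] := eqVneq v 0; first by rewrite mulmx0 !enorm0 mulr0.
have v_gt0 := enorm_gt0 v0.
have u1 : enorm ((enorm v)^-1 *: v) = 1.
  by rewrite enormZ gtr0_norm ?invr_gt0 // mulVf // gt_eqF.
have : enorm (E *m ((enorm v)^-1 *: v)) <= specnorm E.
  by apply: ub_le_sup; [exact: specnorm_has_ubound | exists ((enorm v)^-1 *: v)].
by rewrite -scalemxAr enormZ gtr0_norm ?invr_gt0 // ler_pdivrMl // mulrC.
Qed.

Lemma quadf_le_specnorm n (E : 'M[R]_n) y : `|quadf E y| <= specnorm E * dot y y.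
Proof.
rewrite quadf_dot (le_trans (dot_le_enorm _ _)) //.
rewrite -enorm_sqr expr2 mulrCA.
by apply: ler_wpM2l; [exact: enorm_ge0 | exact: enorm_mul_le].
Qed.

End QuadraticForm.

Section PositiveDefinite.
Variable R : realType.

Lemma posdefmx_unit n (M : 'M[R]_n) : posdefmx M -> M \in unitmx.
Proof.
move=> PD; rewrite unitmxE unitfE; apply/negP => /det0P [v v0 vM].
have := PD v^T; rewrite trmx_eq0 /quadf trmxK vM mul0mx mxE ltxx.
by move/(_ v0).
Qed.

Lemma posdefmx_quadf_ge0 n (M : 'M[R]_n) v : posdefmx M -> 0 <= quadf M v.
Proof.
move=> PD; have [->|v0] := eqVneq v 0; last exact/ltW/PD.
by rewrite /quadf mulmx0 mxE.
Qed.

Lemma posdefmx_conj n (M P : 'M[R]_n) :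
  P \in unitmx -> posdefmx M -> posdefmx (P^T *m M *m P).
Proof.
move=> Pu PD v v0; rewrite quadf_conj; apply: PD.
by apply: contra v0 => /eqP Pv0; rewrite -[v](mulKmx Pu) Pv0 mulmx0.
Qed.

Lemma posdefmx_inv n (M : 'M[R]_n) : M^T = M -> posdefmx M ->
  (invmx M)^T = invmx M /\ posdefmx (invmx M).
Proof.
move=> MT PD; have Mu := posdefmx_unit PD.
have iMT : (invmx M)^T = invmx M by rewrite trmx_inv MT.
split => //; have -> : invmx M = (invmx M)^T *m M *m invmx M.
  by rewrite iMT mulVmx // mul1mx.
by apply: posdefmx_conj; rewrite ?unitmx_inv.
Qed.

Lemma posdefmx_eigen_gt0 n (M : 'M[R]_n) (x : R) :
  posdefmx M -> \det (M - x%:M) = 0 -> 0 < x.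
Proof.
move=> PD /eqP /det0P [v v0 vM].
have vME : v *m M = x *: v.
  by apply/eqP; rewrite -subr_eq0 -mul_mx_scalar -mulmxBr vM.
have := PD v^T; rewrite trmx_eq0 => /(_ v0).
have vvT : (v *m v^T) 0 0 = dot v^T v^T by rewrite /dot trmxK.
by rewrite /quadf trmxK vME -scalemxAl mxE vvT pmulr_lgt0 // dot_gt0 ?trmx_eq0.
Qed.

End PositiveDefinite.

Section SymmetricSqrt.
Variable R : realType.
Local Notation toC := (real_complex R).

Lemma real_symmetric_spectral n (M : 'M[R]_n.+1) : M^T = M ->
  exists (U : 'M[R[i]]_n.+1) (x : 'rV[R]_n.+1),
    [/\ U \is unitarymx,
        map_mx toC M = invmx U *m diag_mx (map_mx toC x) *m U &
        forall i, \det (M - (x 0 i)%:M) = 0].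
Proof.
move=> MT; set Mc := map_mx toC M.
have Mh : Mc \is hermsymmx.
  apply: realsym_hermsym.
    by apply/is_hermitianmxP; rewrite expr0 scale1r map_mx_id // map_trmx MT.
  by apply/mxOverP => i j; rewrite mxE; apply/complex_realP; exists (M i j).
set U := spectralmx Mc; set D := spectral_diag Mc.
have McE : Mc = invmx U *m diag_mx D *m U.
  by apply/orthomx_spectralP/hermitian_normalmx.
have Uu : U \in unitmx := spectral_unit Mc.
pose x := \row_i complex.Re (D 0 i).
have DE : map_mx toC x = D.
  apply/rowP => i; rewrite !mxE RRe_real //.
  exact: (mxOverP (hermitian_spectral_diag_real Mh)).
exists U, x; split; [exact: spectral_unitarymx | by rewrite DE | move=> i].
have Dx : toC (x 0 i) = D 0 i by rewrite -DE [RHS]mxE.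
apply: (@complexI R).
rewrite -det_map_mx map_mxB map_scalar_mx /= -/Mc rmorph0 Dx.
apply/eqP/det0P; exists (row i U).
  apply/eqP => ri0; have : row i (U *m invmx U) = 0 by rewrite row_mul ri0 mul0mx.
  by rewrite mulmxV // => /rowP /(_ i) /eqP; rewrite !mxE eqxx oner_eq0.
have UMc : U *m Mc = diag_mx D *m U by rewrite McE !mulmxA mulmxV // mul1mx.
rewrite mulmxBr -row_mul UMc mul_diag_mx mul_mx_scalar.
by apply/rowP => j; rewrite !mxE subrr.
Qed.

Lemma posdefmx_unitary_diag n (Q : 'M[R]_n) (U : 'M[R[i]]_n) (s : 'rV[R]_n) :
  U \is unitarymx -> map_mx toC Q = invmx U *m diag_mx (map_mx toC s) *m U ->
  (forall i, 0 < s 0 i) -> posdefmx Q.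
Proof.
move=> Uunit QcE s_gt0 v v0; set vc := map_mx toC v; set w := U *m vc.
have vc0 : vc != 0 by rewrite map_mx_eq0.
have w0 : w != 0.
  apply: contra vc0 => /eqP w0.
  by rewrite -(mulKmx (unitarymx_unit Uunit) vc) -/w w0 mulmx0.
have vc_real : (vc^T ^ Num.Def.conjC)%sesqui = vc^T.
  apply/matrixP => i j; rewrite !mxE; apply: conj_Creal.
  by apply/complex_realP; exists (v j i).
have quadfQ : toC (quadf Q v) = \sum_j toC (s 0 j) * `|w j 0| ^+ 2.
  have -> : toC (quadf Q v) = (map_mx toC (v^T *m Q *m v)) 0 0 by rewrite mxE.
  rewrite !map_mxM -map_trmx QcE -/vc invmx_unitary // !mulmxA.
  have -> : vc^T *m (U ^t Num.Def.conjC)%sesqui = ((w^T) ^ Num.Def.conjC)%sesqui.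
    by rewrite /w trmx_mul map_mxM vc_real.
  rewrite mul_mx_diag -mulmxA -/w mxE.
  by apply: eq_bigr => j _; rewrite !mxE normCK; ring.
have [j wj0] : exists j, w j 0 != 0.
  apply/existsP; apply: contraNT w0 => /existsPn w_eq0.
  by apply/eqP/colP => i; rewrite [RHS]mxE; apply/eqP/negbNE/w_eq0.
rewrite -ltcR quadfQ (bigD1 j) //= ltr_wpDr //.
  by apply: sumr_ge0 => i _; rewrite mulr_ge0 // ?ler0c ?ltW.
by rewrite mulr_gt0 ?ltcR // exprn_gt0 // normr_gt0.
Qed.

Lemma sqrtmx_exists n (M : 'M[R]_n) : M^T = M -> posdefmx M ->
  exists Q : 'M[R]_n, [/\ Q^T = Q, posdefmx Q & Q *m Q = M].
Proof.
case: n M => [|n] M MT PD.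
  by exists M; split => //; rewrite [LHS]flatmx0 [RHS]flatmx0.
have [U [x [Uunit McE x_eigen]]] := real_symmetric_spectral MT.
have Uu := unitarymx_unit Uunit.
have x_gt0 i : 0 < x 0 i := posdefmx_eigen_gt0 PD (x_eigen i).
have [p p_sqrt] := poly_interpolation [seq x 0 i | i <- enum 'I_n.+1] Num.sqrt.
pose s := \row_i Num.sqrt (x 0 i).
pose Q := horner_mx M p.
have QcE : map_mx toC Q = invmx U *m diag_mx (map_mx toC s) *m U.
  rewrite map_horner_mx McE horner_mx_uconjC // horner_mx_diag.
  congr (_ *m diag_mx _ *m _); apply/rowP => i; rewrite !mxE horner_map /=.
  by rewrite p_sqrt //; apply: map_f; rewrite mem_enum.
exists Q; split.
- exact: trmx_horner_mx.
- by apply: (posdefmx_unitary_diag Uunit QcE) => i; rewrite mxE sqrtr_gt0.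
- apply: (@map_mx_inj _ _ toC); rewrite map_mxM QcE McE.
  rewrite -!mulmxA (mulmxA U) mulmxV // mul1mx (mulmxA (diag_mx _)) mulmx_diag.
  congr (_ *m (diag_mx _ *m _)); apply/rowP => i.
  by rewrite !mxE -rmorphM /= -expr2 sqr_sqrtr // ltW.
Qed.

End SymmetricSqrt.

Section Sketching.
Variable R : realType.

Lemma invsqrtmxP d (H : 'M[R]_d) : H^T = H -> posdefmx H ->
  [/\ (invsqrtmx H)^T = invsqrtmx H, posdefmx (invsqrtmx H) &
      invsqrtmx H *m invsqrtmx H = invmx H].
Proof.
move=> HT HPD; have [iHT iHPD] := posdefmx_inv HT HPD.
have [Q [QT QPD QQ]] := sqrtmx_exists iHT iHPD.
have sqrt_ex : exists P : 'M[R]_d, P^T = P /\ posdefmx P /\ P *m P = invmx H.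
  by exists Q.
suff [? [? ?]] : (invsqrtmx H)^T = invsqrtmx H /\ posdefmx (invsqrtmx H) /\
    invsqrtmx H *m invsqrtmx H = invmx H by [].
exact: epsilon_spec _ _ sqrt_ex.
Qed.

Lemma quadf_invmx_sub_le d (H K P : 'M[R]_d) g :
  K^T = K -> posdefmx K -> P^T = P -> P \in unitmx -> P *m P = invmx H ->
  `|quadf (invmx H) g - quadf (invmx K) g|
    <= specnorm (P *m K *m P - 1%:M) * quadf (invmx K) g.
Proof.
move=> KT KPD PT Pu PP; set C := P *m K *m P.
have CT : C^T = C by rewrite /C !trmx_mul KT PT mulmxA.
have CPD : posdefmx C by rewrite /C -{1}PT; exact: posdefmx_conj.
have [Q [QT QPD QQ]] := sqrtmx_exists CT CPD.
have Qu := posdefmx_unit QPD.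
set y := invmx Q *m (P *m g).
have quadf_invH : quadf (invmx H) g = quadf C y.
  by rewrite -PP -{1}PT quadf_gram -[P *m g](mulKVmx Qu) -quadf_gram QT QQ.
have quadf_invK : quadf (invmx K) g = dot y y.
  have KE : K = invmx P *m (Q *m Q) *m invmx P.
    by rewrite QQ /C !mulmxA mulVmx // mul1mx mulmxK.
  have KX : K *m ((invmx Q *m P)^T *m (invmx Q *m P)) = 1%:M.
    rewrite KE trmx_mul trmx_inv QT PT !mulmxA mulmxKV // !mulmxK //.
    exact: mulVmx.
  rewrite -[invmx K]mulmx1 -KX mulKmx ?posdefmx_unit //.
  by rewrite quadf_gram /y mulmxA.
rewrite quadf_invH quadf_invK -quadf1 -quadfB quadf1.
exact: quadf_le_specnorm.
Qed.

Lemma Hmat_sym n d (A : 'M[R]_(n, d)) Lam nu :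
  Lam^T = Lam -> (Hmat A Lam nu)^T = Hmat A Lam nu.
Proof. by move=> LamT; rewrite linearD /= linearZ /= trmx_mul trmxK LamT. Qed.

Lemma Hmat_posdef n d (A : 'M[R]_(n, d)) Lam nu :
  (forall v, quadf 1%:M v <= quadf Lam v) -> nu != 0 -> posdefmx (Hmat A Lam nu).
Proof.
move=> Lam_ge1 nu0 v v0; rewrite quadfD quadf_gram quadfZ.
rewrite ltr_wpDl ?dot_ge0 // mulr_gt0 ?exprn_even_gt0 ?nu0 //.
by rewrite (lt_le_trans _ (Lam_ge1 v)) // quadf1 dot_gt0.
Qed.

Lemma HSmatE m n d (S : 'M[R]_(m, n)) (A : 'M[R]_(n, d)) Lam nu :
  HSmat S A Lam nu = Hmat (S *m A) Lam nu.
Proof. by rewrite /HSmat /Hmat trmx_mul !mulmxA. Qed.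

Lemma delta_xE n d (A : 'M[R]_(n, d)) b Lam nu x :
  (Hmat A Lam nu)^T = Hmat A Lam nu -> Hmat A Lam nu \in unitmx ->
  delta_x A b Lam nu x =
    2^-1 * quadf (invmx (Hmat A Lam nu)) (gradf A b Lam nu x).
Proof.
rewrite /delta_x /gradf /xstar; set H := Hmat A Lam nu => HT Hu.
have -> : x - invmx H *m b = invmx H *m (H *m x - b) by rewrite mulmxBr mulKmx.
by rewrite -quadf_conj trmx_inv HT mulVmx // mul1mx.
Qed.

Lemma delta_sub_le_specnorm m n d (S : 'M[R]_(m, n)) (A : 'M[R]_(n, d))
    b Lam nu x :
  Lam^T = Lam -> (forall v, quadf 1%:M v <= quadf Lam v) -> nu != 0 ->
  `|delta_x A b Lam nu x - delta_t S A b Lam nu x|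
    <= specnorm (CSmat S A Lam nu - 1%:M) * delta_t S A b Lam nu x.
Proof.
move=> LamT Lam_ge1 nu0.
have HPD := Hmat_posdef A Lam_ge1 nu0.
have [PT PPD PP] := invsqrtmxP (Hmat_sym A nu LamT) HPD.
rewrite delta_xE ?Hmat_sym ?posdefmx_unit // /delta_t -mulrBr normrM.
rewrite ger0_norm ?invr_ge0 ?ler0n // mulrCA ler_wpM2l ?invr_ge0 ?ler0n //.
apply: quadf_invmx_sub_le; rewrite ?posdefmx_unit // HSmatE.
  exact: Hmat_sym.
exact: Hmat_posdef.
Qed.

Lemma max_sqrtr (r : R) : r <= 1 -> Num.max (Num.sqrt r) r = Num.sqrt r.
Proof.
move=> r_le1; apply/max_idPl; have [r_le0|r_gt0] := lerP r 0.
  exact: le_trans r_le0 (sqrtr_ge0 r).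
have sqrt_le1 : Num.sqrt r <= 1 by rewrite -sqrtr1 ler_wsqrtr.
rewrite -{1}(sqr_sqrtr (ltW r_gt0)) expr2; have := sqrtr_ge0 r; nra.
Qed.

Lemma delta_t_ge0 m n d (S : 'M[R]_(m, n)) (A : 'M[R]_(n, d)) b Lam nu x :
  Lam^T = Lam -> (forall v, quadf 1%:M v <= quadf Lam v) -> nu != 0 ->
  0 <= delta_t S A b Lam nu x.
Proof.
move=> LamT Lam_ge1 nu0; rewrite /delta_t HSmatE mulr_ge0 ?invr_ge0 ?ler0n //.
have [_] := posdefmx_inv (Hmat_sym (S *m A) nu LamT)
                         (Hmat_posdef (S *m A) Lam_ge1 nu0).
exact: posdefmx_quadf_ge0.
Qed.

Lemma eventE_delta_le m n d (S : 'M[R]_(m, n)) (A : 'M[R]_(n, d))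
    b Lam nu rho x :
  Lam^T = Lam -> (forall v, quadf 1%:M v <= quadf Lam v) -> nu != 0 ->
  rho <= 1 -> eventE S A Lam nu rho ->
  `|delta_x A b Lam nu x - delta_t S A b Lam nu x|
    <= Num.sqrt rho * delta_t S A b Lam nu x.
Proof.
move=> LamT Lam_ge1 nu0 rho_le1; rewrite /eventE max_sqrtr // => hE.
apply: le_trans (delta_sub_le_specnorm S A b x LamT Lam_ge1 nu0) _.
by apply: ler_wpM2r hE; exact: delta_t_ge0.
Qed.

End Sketching.

Lemma prob_bigcap_ge (R : realType) d (T : measurableType d) (P : probability T R)
    (E : (set T)^nat) (p : \bar R) :
  (forall j, measurable (E j)) -> nonincreasing_seq E ->
  (forall j, p <= P (E j))%E -> (p <= P (\bigcap_j E j))%E.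
Proof.
move=> mE E_dec p_le.
have P_cvg : P \o E @ \oo --> P (\bigcap_j E j).
  apply: nonincreasing_cvg_mu => //; last exact: bigcapT_measurable.
  by rewrite (le_lt_trans (probability_le1 P (mE 0%N))) ?ltey.
by apply: cvge_to_ge P_cvg _; apply: nearW.
Qed.

Section Events.
Variables (R : realType) (m n d : nat) (S : 'M[R]_(m, n)) (A : 'M[R]_(n, d)).
Variables (Lam : 'M[R]_d) (nu : R).

Lemma eventE_le rho1 rho2 :
  rho1 <= rho2 -> eventE S A Lam nu rho1 -> eventE S A Lam nu rho2.
Proof. by move=> le_rho /le_trans; apply; rewrite le_max2 ?ler_wsqrtr. Qed.

Lemma eventE_right_cont rho :
  (forall j, eventE S A Lam nu (rho + j.+1%:R^-1)) -> eventE S A Lam nu rho.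
Proof.
move=> hE; pose f (r : R) : R := Num.max (Num.sqrt r) r.
have rho_cvg : (fun j => rho + j.+1%:R^-1) @ \oo --> rho.
  rewrite -[X in _ --> X]addr0.
  by apply: cvgD; [exact: cvg_cst | exact: cvg_harmonic].
have f_cont : {for rho, continuous f}.
  by apply: continuous_max; [exact: sqrt_continuous | exact: cvg_id].
apply: (cvgr_to_ge (continuous_cvg _ f_cont rho_cvg)).
exact: nearW.
Qed.

End Events.

Section CriticalSketchSize.
Variables (R : realType) (n d : nat) (A : 'M[R]_(n, d)) (Lam : 'M[R]_d) (nu : R).
Variables (d0 : measure_display) (Omega : measurableType d0).
Variable P : probability Omega R.
Variables (S : forall m : nat, Omega -> 'M[R]_(m, n)) (delta : R).

Local Notation msize := (crit_size A Lam nu P S delta).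

Lemma crit_sizeP m : (msize < m%:R%:E)%E ->
  [/\ 0 < fine msize / m%:R, fine msize / m%:R < 1 &
      forall rho, fine msize / m%:R < rho ->
        ((1 - delta)%:E <= P [set w | eventE (S m w) A Lam nu rho])%E].
Proof.
move=> msize_lt.
have msize_ge1 : (1%:E <= msize)%E.
  by apply: le_ereal_inf_tmp => _ [k [k_ge1 _] <-]; rewrite lee_fin.
have [c msizeE] : exists c, msize = c%:E.
  by move: msize_ge1 msize_lt; case: msize => [c| |] //; exists c.
move: msize_ge1 msize_lt; rewrite msizeE lee_fin lte_fin /= => c_ge1 c_lt_m.
have c_gt0 : 0 < c := lt_le_trans ltr01 c_ge1.
have m_gt0 : 0 < m%:R :> R := lt_trans c_gt0 c_lt_m.
have rho0_gt0 : 0 < c / m%:R by rewrite divr_gt0.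
split => [//||rho c_lt_rho]; first by rewrite ltr_pdivrMr // mul1r.
have rho_gt0 : 0 < rho := lt_trans rho0_gt0 c_lt_rho.
have : (msize < (rho * m%:R)%:E)%E by rewrite msizeE lte_fin -ltr_pdivrMr.
case/ereal_inf_lt => _ [k [_ k_size] <-]; rewrite lte_fin => k_lt.
apply: k_size => //; first by rewrite -(ltr0n R).
by rewrite ler_pdivrMr // mulrC ltW.
Qed.

Hypothesis S_measurable : forall (m : nat) (rho : R), 0 < rho ->
  measurable [set w | eventE (S m w) A Lam nu rho].

Lemma prob_eventE_crit_size m : (msize < m%:R%:E)%E ->
  ((1 - delta)%:E <= P [set w | eventE (S m w) A Lam nu (fine msize / m%:R)])%E.
Proof.
move=> /crit_sizeP[rho0_gt0 _ prob_ge].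
set rho0 := fine msize / m%:R in rho0_gt0 prob_ge *.
pose E j := [set w | eventE (S m w) A Lam nu (rho0 + j.+1%:R^-1)].
have E_measurable j : measurable (E j) by apply: S_measurable; rewrite addr_gt0.
apply: (@le_trans _ _ (P (\bigcap_j E j))).
  apply: prob_bigcap_ge => // [i j ij|j]; last by rewrite prob_ge // ltrDl.
  apply/subsetPset => w; apply: eventE_le.
  by rewrite lerD2l lef_pV2 ?posrE // ler_nat.
apply: le_measure; rewrite ?inE; first exact: bigcapT_measurable.
  exact: S_measurable.
by move=> w Ew; apply: eventE_right_cont => j; exact: Ew.
Qed.

End CriticalSketchSize.

Theorem lemma2p1 (R : realType) (n d : nat) (A : 'M[R]_(n, d))
  (b : 'cV[R]_d) (Lam : 'M[R]_d) (nu : R) :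
  (d <= n)%N ->
  is_diag_mx Lam ->
  (forall v : 'cV[R]_d, quadf 1%:M v <= quadf Lam v) ->
  0 < nu ->
  (* deterministic part *)
  (forall (m : nat) (S : 'M[R]_(m, n)) (rho : R),
     0 < rho < 1 ->
     eventE S A Lam nu rho ->
     forall x : 'cV[R]_d,
       `|delta_x A b Lam nu x - delta_t S A b Lam nu x|
         <= Num.sqrt rho * delta_t S A b Lam nu x)
  /\
  (* probabilistic consequence for a random embedding *)
  (forall (d0 : measure_display) (Omega : measurableType d0)
          (P : probability Omega R) (S : forall m : nat, Omega -> 'M[R]_(m, n)),
     (forall (m : nat) (rho : R), 0 < rho ->
        measurable [set w | eventE (S m w) A Lam nu rho]) ->
     forall delta : R, 0 < delta < 1 ->
     forall m : nat, (crit_size A Lam nu P S delta < m%:R%:E)%E ->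
     exists F : set Omega,
       [/\ measurable F,
           ((1 - delta)%:E <= P F)%E &
           forall w, F w -> forall x : 'cV[R]_d,
             `|delta_x A b Lam nu x - delta_t (S m w) A b Lam nu x|
               <= Num.sqrt (fine (crit_size A Lam nu P S delta) / m%:R)
                  * delta_t (S m w) A b Lam nu x]).
Proof.
move=> _ Lam_diag Lam_ge1 nu_gt0; have nu0 : nu != 0 by rewrite gt_eqF.
have LamT : Lam^T = Lam by case/diag_mxP: Lam_diag => e ->; exact: tr_diag_mx.
split=> [m S rho /andP[_ rho_lt1] hE x|d0 Omega P S S_meas delta _ m msize_lt].
  exact: eventE_delta_le (ltW rho_lt1) hE.
have [rho0_gt0 rho0_lt1 _] := crit_sizeP msize_lt.
set rho0 := fine (crit_size A Lam nu P S delta) / m%:R in rho0_gt0 rho0_lt1 *.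
exists [set w | eventE (S m w) A Lam nu rho0].
split; [exact: S_meas | exact: prob_eventE_crit_size |].
by move=> w hE x; exact: eventE_delta_le (ltW rho0_lt1) hE.
Qed.
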